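(* For each $n\in\mathbf{N}$, let $\mathcal{X}_n=\{1,\dots,n\}$, fix a chair preference $\succ$ (a ranking) on $\mathcal{X}_n$, and let $R^n$ (respectively $\mathrel{W}^n$) be a uniform random draw from the set of all rankings (respectively tournaments) on $\mathcal{X}_n$, with $R^n$ and $\mathrel{W}^n$ independent. Then $$\Pr\left(R^n \text{ is } \mathrel{W}^n\text{-unimprovable}\ \middle|\ R^n \text{ is } \mathrel{W}^n\text{-feasible}\right)\to 0\quad\text{as } n\to\infty.$$
   Context: A proto-ranking is an irreflexive transitive relation; a ranking is a total proto-ranking; a tournament is a total asymmetric relation on $\mathcal{X}_n$. Interaction: given a tournament $\mathrel{W}$, start from $R_0=\varnothing$; in each period with $R_{t-1}$ not total the chair offers a pair $\{x,y\}$ unranked by $R_{t-1}$, the winner is $x$ if $x\mathrel{W}y$ and $y$ otherwise, and $R_t$ is the transitive closure of $R_{t-1}\cup\{(\text{winner},\text{loser})\}$; stop when $R_t$ is total. A strategy assigns to each non-terminal history a pair unranked at it; its outcome under $\mathrel{W}$ is the final ranking. A ranking is $\mathrel{W}$-feasible if it is the outcome under $\mathrel{W}$ of some strategy. $R$ is more aligned with $\succ$ than $R'$ if for all $x\succ y$, $xR'y$ implies $xRy$; a ranking is $\mathrel{W}$-unimprovable if no other $\mathrel{W}$-feasible ranking is more aligned with $\succ$. *)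

From mathcomp Require Import all_boot all_order all_algebra.
From Stdlib Require Import ClassicalEpsilon.
Set Implicit Arguments. Unset Strict Implicit. Unset Printing Implicit Defensive.
Import Order.TTheory GRing.Theory Num.Theory.

Definition decP (P : Prop) : bool :=
  if excluded_middle_informative P then true else false.

(* Binary relations on a finite type T are represented as sets of pairs:
   x R y  <->  (x, y) \in R. *)
Section Rels.
Variable T : finType.

Definition irreflexiveb (R : {set T * T}) : bool := [forall x, (x, x) \notin R].
Definition transitiveb (R : {set T * T}) : bool :=
  [forall x, forall y, forall z, ((x, y) \in R) && ((y, z) \in R) ==> ((x, z) \in R)].
Definition totalb (R : {set T * T}) : bool :=
  [forall x, forall y, (x != y) ==> ((x, y) \in R) || ((y, x) \in R)].
Definition asymmetricb (R : {set T * T}) : bool :=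
  [forall x, forall y, ((x, y) \in R) ==> ((y, x) \notin R)].

Definition proto_ranking (R : {set T * T}) : bool := irreflexiveb R && transitiveb R.
Definition ranking (R : {set T * T}) : bool := proto_ranking R && totalb R.
Definition tournament (W : {set T * T}) : bool := totalb W && asymmetricb W.

Definition unranked (R : {set T * T}) (x y : T) : bool :=
  [&& x != y, (x, y) \notin R & (y, x) \notin R].

Definition tclosure (E : seq (T * T)) : {set T * T} :=
  [set p | [exists z, ((p.1, z) \in E) && connect (fun a b => (a, b) \in E) z p.2]].

(* A history is the list of (winner, loser) results so far; R_t is the
   transitive closure of these results. A strategy maps histories to pairs. *)
Definition strategy := seq (T * T) -> T * T.

Definition valid_strategy (s : strategy) : Prop :=
  forall h : seq (T * T), ~~ totalb (tclosure h) -> unranked (tclosure h) (s h).1 (s h).2.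

Definition step (W : {set T * T}) (s : strategy) (h : seq (T * T)) : seq (T * T) :=
  if totalb (tclosure h) then h
  else let x := (s h).1 in let y := (s h).2 in
       rcons h (if (x, y) \in W then (x, y) else (y, x)).

(* The interaction stops after at most #|T|(#|T|-1)/2 periods (each period ranks a
   new pair); running #|T|*#|T| periods (with stopping) thus reaches the end. *)
Definition outcome (W : {set T * T}) (s : strategy) : {set T * T} :=
  tclosure (iter (#|T| * #|T|) (step W s) [::]).

Definition feasible (W R : {set T * T}) : Prop :=
  exists s : strategy, valid_strategy s /\ outcome W s = R.

Definition more_aligned (pref R R' : {set T * T}) : Prop :=
  forall x y, (x, y) \in pref -> (x, y) \in R' -> (x, y) \in R.

Definition unimprovable (pref W R : {set T * T}) : Prop :=
  ~ (exists R' : {set T * T}, R' <> R /\ feasible W R' /\ more_aligned pref R' R).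

End Rels.

Local Open Scope ring_scope.

(* Pr(R is W-unimprovable | R is W-feasible) for R, W independent uniform
   over rankings, resp. tournaments, on 'I_n (= X_n). *)
Definition cond_prob (n : nat) (pref : {set 'I_n * 'I_n}) : rat :=
  (#|[set p : {set 'I_n * 'I_n} * {set 'I_n * 'I_n} |
        [&& ranking p.1, tournament p.2, decP (feasible p.2 p.1)
          & decP (unimprovable pref p.2 p.1)]]|%:R)
  / (#|[set p : {set 'I_n * 'I_n} * {set 'I_n * 'I_n} |
        [&& ranking p.1, tournament p.2 & decP (feasible p.2 p.1)]]|%:R).

(* Write a ranking as a permutation [r] of positions ([r 0] on top).  It is
   W-feasible iff W contains the Hamiltonian path r 0 -> r 1 -> ... : the chair can
   get every pair of neighbours compared, and neighbours in the outcome must have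
   been compared directly.  Relabelling W along [r], feasible pairs (R, W) become
   pairs (r, V) with V containing the path 0 -> 1 -> ... -> n.
   Cut the positions into blocks a, ..., a+4.  If the chair likes [r (a+1)] least
   among [r (a+1)], [r (a+2)], [r (a+3)] and V has the edges a -> a+2, a+3 -> a+1 and
   a+1 -> a+4, then sending [r (a+1)] two places down keeps a Hamiltonian path and
   only reverses pairs the chair disagreed with, so R is not unimprovable.  Moving
   one of the three elements to position a+1 and reversing the three edges is a
   family of 24 bijections, one of which always produces this event, and the
   blocks do not interact; hence at most a fraction (23/24)^m of the feasible pairs
   avoid it in all m = (n+1)/5 blocks. *)

From Pilot Require Import Defs.
From mathcomp Require Import all_boot all_order all_algebra.
From mathcomp Require Import all_fingroup zify.
From Stdlib Require Import ClassicalEpsilon.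
Import Order.TTheory GRing.Theory Num.Theory.
Set Implicit Arguments. Unset Strict Implicit. Unset Printing Implicit Defensive.

Lemma decPP (P : Prop) : reflect P (Defs.decP P).
Proof. by rewrite /Defs.decP; case: excluded_middle_informative => ?; constructor. Qed.

Section Relations.
Variable T : finType.
Implicit Types (R W : {set T * T}) (h : seq (T * T)) (s : strategy T).

Lemma irreflexivebP R : reflect (forall x, (x, x) \notin R) (irreflexiveb R).
Proof. exact: forallP. Qed.

Lemma transitivebP R :
  reflect (forall x y z, (x, y) \in R -> (y, z) \in R -> (x, z) \in R) (transitiveb R).
Proof.
apply: (iffP forallP) => [tr x y z xy yz | tr x].
  by move/forallP/(_ y)/forallP/(_ z)/implyP: (tr x); apply; rewrite xy.
by apply/forallP=> y; apply/forallP=> z; apply/implyP=> /andP[]; apply: tr.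
Qed.

Lemma totalbP R :
  reflect (forall x y, x != y -> ((x, y) \in R) || ((y, x) \in R)) (totalb R).
Proof.
apply: (iffP forallP) => [tot x y | tot x]; first by move/forallP/(_ y)/implyP: (tot x).
by apply/forallP=> y; apply/implyP; apply: tot.
Qed.

Lemma asymmetricbP R :
  reflect (forall x y, (x, y) \in R -> (y, x) \notin R) (asymmetricb R).
Proof.
apply: (iffP forallP) => [asy x y | asy x]; first by move/forallP/(_ y)/implyP: (asy x).
by apply/forallP=> y; apply/implyP; apply: asy.
Qed.

Lemma rankingE R : ranking R = [&& irreflexiveb R, transitiveb R & totalb R].
Proof. by rewrite /ranking /proto_ranking andbA. Qed.

Lemma ranking_trans R : ranking R -> transitiveb R.
Proof. by rewrite rankingE => /and3P[]. Qed.

Lemma ranking_total R : ranking R -> totalb R.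
Proof. by rewrite rankingE => /and3P[]. Qed.

Lemma ranking_asym R x y : ranking R -> (x, y) \in R -> (y, x) \notin R.
Proof.
rewrite rankingE => /and3P[/irreflexivebP irr /transitivebP tr _] xy.
by apply: contraNN (irr x); apply: tr.
Qed.

Lemma ranking_neq R x y : ranking R -> (x, y) \in R -> x != y.
Proof. by rewrite rankingE => /and3P[/irreflexivebP irr _ _] xy; apply: contraTneq xy => ->. Qed.

Lemma ranking_min3 R x y z : ranking R -> x != y -> x != z -> y != z ->
  [\/ ((y, x) \in R) && ((z, x) \in R), ((x, y) \in R) && ((z, y) \in R)
     | ((x, z) \in R) && ((y, z) \in R)].
Proof.
move=> rR xy xz yz; have /transitivebP tr := ranking_trans rR.
have /totalbP tot := ranking_total rR; have asy := ranking_asym rR.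
case/orP: (tot x y xy) => Rxy; case/orP: (tot x z xz) => Rxz; case/orP: (tot y z yz) => Ryz.
all: try by [constructor 1; apply/andP | constructor 2; apply/andP | constructor 3; apply/andP].
- by have := asy _ _ (tr _ _ _ Rxy Ryz); rewrite Rxz.
- by have := asy _ _ (tr _ _ _ Ryz Rxy); rewrite Rxz.
Qed.

Lemma total_sub_ranking R' R : totalb R' -> ranking R -> {subset R' <= R} -> R' = R.
Proof.
move=> /totalbP tot rR sub; apply/setP=> -[x y]; apply/idP/idP=> [/sub //|xy].
case/orP: (tot x y (ranking_neq rR xy)) => // /sub yx.
by rewrite (negbTE (ranking_asym rR xy)) in yx.
Qed.

Lemma mem_tclosure h x y : ((x, y) \in tclosure h) =
  [exists z, ((x, z) \in h) && connect (fun a b => (a, b) \in h) z y].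
Proof. by rewrite inE. Qed.

Lemma tclosure_sub h : {subset h <= tclosure h}.
Proof. by move=> [x y] xy; rewrite mem_tclosure; apply/existsP; exists y; rewrite xy connect0. Qed.

Lemma tclosure_trans h : transitiveb (tclosure h).
Proof.
apply/transitivebP=> x y z; rewrite !mem_tclosure.
move=> /existsP[u /andP[xu uy]] /existsP[v /andP[yv vz]].
apply/existsP; exists u; rewrite xu; apply: connect_trans uy _.
exact: connect_trans (connect1 yv) vz.
Qed.

Lemma connect_sub_trans h R : {subset h <= R} -> transitiveb R ->
  forall x y, connect (fun a b => (a, b) \in h) x y -> x = y \/ (x, y) \in R.
Proof.
move=> sub /transitivebP tr x y /connectP[p]; elim: p x => [|z p IHp] x /=.
  by move=> _ ->; left.
case/andP=> xz zp ey; right; case: (IHp z zp ey) => [<-|]; first exact: sub.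
exact: tr (sub _ xz).
Qed.

Lemma tclosure_min h R : {subset h <= R} -> transitiveb R -> {subset tclosure h <= R}.
Proof.
move=> sub trR [x y]; rewrite mem_tclosure => /existsP[z /andP[xz zy]].
case: (connect_sub_trans sub trR zy) => [<-|]; first exact: sub.
by move/transitivebP: trR; apply; apply: sub.
Qed.

Lemma tclosure_cover h x y : (x, y) \in tclosure h ->
  (forall z, (x, z) \in tclosure h -> (z, y) \notin tclosure h) -> (x, y) \in h.
Proof.
rewrite mem_tclosure => /existsP[z /andP[xz zy]] nomid.
case: (connect_sub_trans (@tclosure_sub h) (tclosure_trans h) zy) => [<-//|zy'].
by rewrite (negbTE (nomid z (tclosure_sub xz))) in zy'.
Qed.

Definition history W s k := iter k (step W s) [::].

Lemma outcomeE W s : outcome W s = tclosure (history W s (#|T| * #|T|)).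
Proof. by []. Qed.

Lemma history_sub W s k : valid_strategy s -> totalb W -> {subset history W s k <= W}.
Proof.
move=> vs /totalbP tot; elim: k => [|k IHk] //= p.
rewrite {1}/step; case: ifP => [_|ntot]; first exact: IHk.
rewrite mem_rcons inE => /orP[/eqP->|]; last exact: IHk.
case/and3P: (vs _ (negbT ntot)) => xy _ _.
by case: ifP => // yx; case/orP: (tot _ _ xy); rewrite ?yx.
Qed.

(* Every period ranks a new pair of distinct elements, so the play stops in time. *)
Lemma outcome_total W s : valid_strategy s -> totalb (outcome W s).
Proof.
move=> vs; have inv (k : nat) : let h := history W s k in
    [&& uniq h, all (fun p => p.1 != p.2) h & totalb (tclosure h) || (size h == k)].
  elim: k => [|k]; first by rewrite /= orbT.
  rewrite /history /=; set h := iter k _ _ => /and3P[uh dh th].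
  rewrite /step; case: ifP => [-> |ntot]; first by rewrite uh dh.
  rewrite ntot /= in th; case/and3P: (vs _ (negbT ntot)).
  set x := (s h).1; set y := (s h).2 => xy nxy nyx.
  rewrite rcons_uniq all_rcons size_rcons (eqP th) eqxx orbT uh dh !andbT.
  by case: ifP => _; rewrite ?(eq_sym y x) xy andbT;
    [apply: contraNN nxy | apply: contraNN nyx]; apply: tclosure_sub.
case: (pickP (@predT T)) => [t _|T0]; last by apply/totalbP => x; have := T0 x.
rewrite outcomeE; case/and3P: (inv (#|T| * #|T|)) => uh dh /orP[//|/eqP sz].
suff : #|history W s (#|T| * #|T|)| < #|T| * #|T| by rewrite (card_uniqP uh) sz ltnn.
rewrite -[X in _ < X]card_prod -[X in _ < X]cardsT; apply/proper_card/properP.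
split; first exact/subsetP.
by exists (t, t) => //; apply: contraTN dh => td; apply/allPn; exists (t, t); rewrite ?eqxx.
Qed.

End Relations.

Section PermRankings.
Variable n : nat.
Implicit Types (r : {perm 'I_n}) (R W : {set 'I_n * 'I_n}) (h : seq ('I_n * 'I_n)).

Definition perm_rel r : {set 'I_n * 'I_n} := [set p | (r^-1)%g p.1 < (r^-1)%g p.2].

Lemma mem_perm_rel r x y : ((x, y) \in perm_rel r) = ((r^-1)%g x < (r^-1)%g y).
Proof. by rewrite inE. Qed.

Lemma perm_relE r i j : ((r i, r j) \in perm_rel r) = (i < j).
Proof. by rewrite mem_perm_rel !permK. Qed.

Lemma perm_rel_ranking r : ranking (perm_rel r).
Proof.
rewrite rankingE; apply/and3P; split.
- by apply/irreflexivebP=> x; rewrite mem_perm_rel ltnn.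
- by apply/transitivebP=> x y z; rewrite !mem_perm_rel; apply: ltn_trans.
apply/totalbP=> x y xy; rewrite !mem_perm_rel -neq_ltn.
by rewrite (inj_eq val_inj) (inj_eq perm_inj).
Qed.

Lemma perm_rel_inj : injective perm_rel.
Proof.
(* [r'^-1 \o r] is increasing, hence above the identity, and so is its inverse. *)
have above_id r r' (i : 'I_n) : perm_rel r = perm_rel r' -> i <= (r'^-1)%g (r i).
  move=> e; have incr (j k : 'I_n) : j < k -> (r'^-1)%g (r j) < (r'^-1)%g (r k).
    by rewrite -mem_perm_rel -e perm_relE.
  elim: (i : nat) {-2}i (erefl (i : nat)) => [|k IHk] j jk; first by rewrite jk.
  have kn : k < n by have := ltn_ord j; lia.
  by rewrite jk; apply: leq_ltn_trans (IHk (Ordinal kn) erefl) (incr _ _ _); rewrite /= jk.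
move=> r1 r2 e; apply/permP=> i; set j := (r2^-1)%g (r1 i).
have : j <= (r1^-1)%g (r2 j) by apply: above_id.
rewrite permKV permK => ji; have ij := above_id r1 r2 i e.
by rewrite -[r1 i](permKV r2) -/j (_ : j = i) //; apply/val_inj/eqP; rewrite eqn_leq ji.
Qed.

Lemma ranking_perm_rel R : ranking R -> exists r, R = perm_rel r.
Proof.
rewrite rankingE => /and3P[/irreflexivebP irr /transitivebP tr /totalbP tot].
pose rk x := #|[set y | (y, x) \in R]|.
have rk_lt x : rk x < n.
  rewrite -[n]card_ord; apply/proper_card/properP; split; first exact/subsetP.
  by exists x; rewrite ?inE.
have rk_mono x y : (x, y) \in R -> rk x < rk y.
  move=> xy; apply/proper_card/properP; split.
    by apply/subsetP=> z; rewrite !inE => zx; apply: tr zx xy.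
  by exists x; rewrite !inE.
pose f x := Ordinal (rk_lt x).
have f_inj : injective f.
  move=> x y /(congr1 val)/= e; apply/eqP; apply: contraT => /tot.
  by case/orP=> /rk_mono; rewrite e ltnn.
exists (perm f_inj)^-1%g; apply/setP=> -[x y]; rewrite mem_perm_rel invgK !permE.
apply/idP/idP=> [/rk_mono //| lt].
have xy : x != y by apply: contraTneq lt => ->; rewrite ltnn.
by case/orP: (tot x y xy) => // /rk_mono; rewrite ltnNge (ltnW lt).
Qed.

Definition ham_path W r : bool :=
  [forall i : 'I_n, forall j : 'I_n, (j == i.+1 :> nat) ==> ((r i, r j) \in W)].

Lemma ham_pathP W r :
  reflect (forall i j : 'I_n, j = i.+1 :> nat -> (r i, r j) \in W) (ham_path W r).
Proof.
apply: (iffP forallP) => [hp i j ij | hp i].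
  by move/forallP/(_ j)/implyP: (hp i); apply; apply/eqP.
by apply/forallP=> j; apply/implyP=> /eqP; apply: hp.
Qed.

Lemma perm_rel_min R r : transitiveb R -> ham_path R r -> {subset perm_rel r <= R}.
Proof.
move=> /transitivebP tr /ham_pathP hp [x y]; rewrite -[x](permKV r) -[y](permKV r) perm_relE.
move: ((r^-1)%g x) ((r^-1)%g y) => i k /subnKC; move: (k - i.+1) => d.
elim: d k => [|d IHd] k ik; first by apply: hp => /=; lia.
have jn : i.+1 + d < n by have := ltn_ord k; lia.
apply: tr (IHd (Ordinal jn) erefl) _; apply: hp => /=; lia.
Qed.

Definition adjacent r : pred ('I_n * 'I_n) :=
  [pred p | [exists q : 'I_n * 'I_n, (q.2 == q.1.+1 :> nat) && (p == (r q.1, r q.2))]].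

Lemma adjacent_sub r : {subset adjacent r <= perm_rel r}.
Proof. by move=> _ /existsP[q /andP[/eqP e /eqP->]]; rewrite perm_relE /= e. Qed.

Lemma unranked_adjacent r h : all (adjacent r) h -> ~~ totalb (tclosure h) ->
  exists q : 'I_n * 'I_n, (q.2 == q.1.+1 :> nat) && unranked (tclosure h) (r q.1) (r q.2).
Proof.
move=> /allP adj ntot; apply/existsP; move: ntot; apply: contraNT => /existsPn none.
have sub := tclosure_min (fun p hp => adjacent_sub (adj p hp))
  (ranking_trans (perm_rel_ranking r)).
have hp : ham_path (tclosure h) r.
  apply/ham_pathP=> i j ij; move: (none (i, j)); rewrite /= ij eqxx /unranked /=.
  have rij : r i != r j by apply/eqP => /perm_inj eij; move: ij; rewrite eij; lia.
  have rji : (r j, r i) \notin tclosure h by apply/negP => /sub; rewrite perm_relE; lia.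
  by rewrite rij rji andbT negbK.
apply/totalbP=> x y /(totalbP _ (ranking_total (perm_rel_ranking r))).
by case/orP=> /(perm_rel_min (tclosure_trans h) hp) ->; rewrite ?orbT.
Qed.

(* [t0] only supplies a default value: there is no strategy at all on an empty type. *)
Definition adjacent_strategy r (t0 : 'I_n) : strategy 'I_n := fun h =>
  if [pick q : 'I_n * 'I_n | (q.2 == q.1.+1 :> nat) && unranked (tclosure h) (r q.1) (r q.2)]
  is Some q then (r q.1, r q.2)
  else odflt (t0, t0) [pick p | unranked (tclosure h) p.1 p.2].

Lemma adjacent_strategy_valid r t0 : valid_strategy (adjacent_strategy r t0).
Proof.
move=> h /totalbP ntot; rewrite /adjacent_strategy; case: pickP => [q /andP[] //|_].
case: pickP => [p //|none]; exfalso; apply: ntot => x y xy.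
by move: (none (x, y)); rewrite /unranked /= xy; case: (_ \in _); case: (_ \in _).
Qed.

Lemma history_adjacent W r t0 k : ham_path W r ->
  all (adjacent r) (history W (adjacent_strategy r t0) k).
Proof.
move=> /ham_pathP hp; elim: k => [|k] //=; rewrite {2}/history /=.
set h := iter k _ _ => adj; rewrite /step; case: ifP => // /negbT ntot.
rewrite all_rcons adj andbT /adjacent_strategy; case: pickP => [q /andP[/eqP e _]|none].
  by rewrite hp //; apply/existsP; exists q; rewrite e !eqxx.
by have [q] := unranked_adjacent adj ntot; rewrite none.
Qed.

Lemma feasible_perm_relP W r (t0 : 'I_n) : tournament W ->
  feasible W (perm_rel r) <-> ham_path W r.
Proof.
case/andP=> totW _; split=> [[s [vs out]] | hp].
  apply/ham_pathP=> i j ij; apply: (history_sub vs totW).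
  apply: (@tclosure_cover _ (history W s (#|'I_n| * #|'I_n|))).
    by rewrite -outcomeE out perm_relE ij.
  move=> z; rewrite -outcomeE out -[z](permKV r) !perm_relE; lia.
exists (adjacent_strategy r t0); split; first exact: adjacent_strategy_valid.
apply: total_sub_ranking (outcome_total _ _) (perm_rel_ranking r) _.
- exact: adjacent_strategy_valid.
apply: tclosure_min (ranking_trans (perm_rel_ranking r)) => p.
by move/allP: (history_adjacent t0 (#|'I_n| * #|'I_n|) hp) => adj /adj/adjacent_sub.
Qed.

End PermRankings.

Section Tournaments.
Variable T : finType.
Implicit Types (W : {set T * T}) (r : {perm T}).

Definition flip_edge (b : bool) (u v : T) W : {set T * T} :=
  [set p | (b && ((p == (u, v)) || (p == (v, u)))) (+) (p \in W)].

Lemma flip_edgeK b u v : involutive (flip_edge b u v).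
Proof. by move=> W; apply/setP=> p; rewrite !inE addKb. Qed.

Lemma flip_edge_inj b u v : injective (flip_edge b u v).
Proof. exact: inv_inj (flip_edgeK b u v). Qed.

Lemma flip_edge_self b u v W : ((u, v) \in flip_edge b u v W) = b (+) ((u, v) \in W).
Proof. by rewrite inE eqxx andbT. Qed.

Lemma flip_edge_other b u v W x y : [&& x != u & x != v] || [&& y != u & y != v] ->
  ((x, y) \in flip_edge b u v W) = ((x, y) \in W).
Proof.
move=> off; rewrite inE !xpair_eqE; case: b => //=.
by case/orP: off => /andP[/negbTE-> /negbTE->]; rewrite ?andbF.
Qed.

Lemma flip_edge_tournament b u v W : u != v -> tournament W -> tournament (flip_edge b u v W).
Proof.
move=> uv /andP[/totalbP tot /asymmetricbP asy].
have edge_sym x y :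
    ((y, x) == (u, v)) || ((y, x) == (v, u)) = ((x, y) == (u, v)) || ((x, y) == (v, u)).
  by rewrite !xpair_eqE orbC andbC [(x == v) && _]andbC.
apply/andP; split.
  apply/totalbP=> x y xy; rewrite !inE edge_sym; case: (b && _) => //=; last exact: tot.
  by case: (boolP ((x, y) \in W)) => // /asy ->.
apply/asymmetricbP=> x y; rewrite !inE edge_sym; case E: (b && _) => /=; last exact: asy.
have xy : x != y.
  apply: contraTneq E => ->; rewrite !xpair_eqE.
  by apply/negP=> /andP[_ /orP[] /andP[/eqP yu /eqP yv]]; move: uv; rewrite -yu yv eqxx.
by rewrite negbK => nxy; case/orP: (tot x y xy) => // xyW; rewrite xyW in nxy.
Qed.

Definition relabel r W : {set T * T} := [set p | (r p.1, r p.2) \in W].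

Lemma relabelK r W : relabel (r^-1)%g (relabel r W) = W.
Proof. by apply/setP=> -[x y]; rewrite !inE /= !permKV. Qed.

Lemma relabel_tournament r W : tournament W -> tournament (relabel r W).
Proof.
case/andP=> /totalbP tot /asymmetricbP asy; apply/andP; split.
  by apply/totalbP=> x y xy; rewrite !inE; apply: tot; rewrite (inj_eq perm_inj).
by apply/asymmetricbP=> x y; rewrite !inE; apply: asy.
Qed.

End Tournaments.

Lemma sum_indicator (T : finType) (A P : pred T) :
  \sum_(x | A x) (P x : nat) = #|[set x | A x && P x]|.
Proof.
rewrite (eq_bigr (fun x => if P x then 1 else 0)) => [|x _]; last by case: (P x).
by rewrite -big_mkcondr sum1dep_card.
Qed.

(* Double counting over the pairs (g, x) with E failing at act g x. *)
Lemma card_act_avoid (X G : finType) (act : G -> X -> X) (A : {set X}) (E : pred X) :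
  (forall g, injective (act g)) -> (forall g, {homo act g : x / x \in A}) ->
  (forall x, x \in A -> exists g, E (act g x)) ->
  #|[set x in A | ~~ E x]| * #|G| <= #|A| * #|G|.-1.
Proof.
move=> inj homA hit.
have actA g : act g @: A = A.
  apply/eqP; rewrite eqEcard card_imset // leqnn andbT.
  by apply/subsetP=> _ /imsetP[x xA ->]; apply: homA.
have card_fail g : #|[set x in A | ~~ E (act g x)]| = #|[set x in A | ~~ E x]|.
  rewrite -(card_imset _ (inj g)); apply: eq_card => y; rewrite [RHS]inE.
  apply/imsetP/andP=> [[x] | [yA nE]].
    by rewrite inE => /andP[xA nE] ->; rewrite homA.
  have : y \in act g @: A by rewrite actA.
  by case/imsetP=> x xA yx; exists x; rewrite // inE xA -yx.
have -> : #|[set x in A | ~~ E x]| * #|G| = \sum_(g : G) #|[set x in A | ~~ E (act g x)]|.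
  by rewrite (eq_bigr _ (fun g _ => card_fail g)) sum_nat_const mulnC.
under eq_bigr => g _ do rewrite -sum_indicator.
rewrite exchange_big /= -sum_nat_const; apply: leq_sum => x xA.
have [g0 Eg0] := hit x xA; rewrite sum_indicator.
have lt : #|[set g | true && ~~ E (act g x)]| < #|G|.
  rewrite -cardsT; apply/proper_card/properP; split; first exact/subsetP.
  by exists g0; rewrite ?inE ?Eg0.
by rewrite -ltnS (ltn_predK lt).
Qed.

Definition rot3 a k : nat :=
  if k == a.+1 then a.+2 else if k == a.+2 then a.+3 else if k == a.+3 then a.+1 else k.

Lemma rot3_succ a k :
  [\/ rot3 a k = a /\ rot3 a k.+1 = a.+2, rot3 a k = a.+3 /\ rot3 a k.+1 = a.+1,
      rot3 a k = a.+1 /\ rot3 a k.+1 = a.+4 | rot3 a k.+1 = (rot3 a k).+1].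
Proof.
rewrite /rot3; repeat case: eqP => ? /=.
all: by [constructor 1; lia | constructor 2; lia | constructor 3; lia | constructor 4; lia].
Qed.

Lemma rot3_block a : [/\ rot3 a a.+1 = a.+2, rot3 a a.+2 = a.+3 & rot3 a a.+3 = a.+1].
Proof. by rewrite /rot3; split; repeat case: eqP => ? /=; lia. Qed.

Lemma rot3_inversion a i k : i < k -> rot3 a k < rot3 a i -> k = a.+3 /\ (i = a.+1 \/ i = a.+2).
Proof. by rewrite /rot3; repeat case: eqP => ? /=; lia. Qed.

Lemma rot3_le a k m : a.+3 <= m -> k <= m -> rot3 a k <= m.
Proof. by rewrite /rot3; repeat case: eqP => ? /=; lia. Qed.

Section Blocks.
Variable n : nat.
Local Notation T := 'I_n.+1.
Local Notation pos k := (@inord n k).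
Local Notation labelled := ({perm T} * {set T * T})%type.
Variable pref : {set T * T}.
Implicit Types (x : labelled) (a k : nat).

Lemma val_pos k : k <= n -> pos k = k :> nat.
Proof. by move=> kn; rewrite inordK. Qed.

Lemma eq_pos (i : T) k : k <= n -> (i == pos k) = (i == k :> nat).
Proof. by move=> kn; rewrite -val_eqE /= val_pos. Qed.

Lemma pos_eq j k : j <= n -> k <= n -> (pos j == pos k) = (j == k).
Proof. by move=> jn kn; rewrite eq_pos // val_pos. Qed.

(* A labelled pair [(r, V)] stands for the ranking with [r i] at position [i] and
   the tournament [V] between positions, i.e. for the pair [unlabel (r, V)]. *)
Definition unlabel x : {set T * T} * {set T * T} := (perm_rel x.1, relabel (x.1^-1)%g x.2).

Definition feasible_pairs : {set labelled} :=
  [set x | tournament x.2 && ham_path x.2 1%g].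

Lemma feasible_pairsP x :
  reflect (tournament x.2 /\ forall i j : T, j = i.+1 :> nat -> (i, j) \in x.2)
    (x \in feasible_pairs).
Proof.
rewrite inE; apply: (iffP andP) => -[tW hp]; split=> //.
  by move=> i j /(ham_pathP _ _ hp); rewrite !perm1.
by apply/ham_pathP=> i j ij; rewrite !perm1; apply: hp.
Qed.

(* When this holds, moving [r (a+1)] below [r (a+2)] and [r (a+3)] is feasible
   and improves the ranking. *)
Definition improvable_block a x : bool :=
  [&& (x.1 (pos a.+2), x.1 (pos a.+1)) \in pref, (x.1 (pos a.+3), x.1 (pos a.+1)) \in pref,
      (pos a, pos a.+2) \in x.2, (pos a.+3, pos a.+1) \in x.2 & (pos a.+1, pos a.+4) \in x.2].

Definition block_act a (g : 'I_3 * bool * bool * bool) x : labelled :=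
  let: (k, b1, b2, b3) := g in
  ((tperm (pos a.+1) (pos (a.+1 + k)) * x.1)%g,
   flip_edge b1 (pos a) (pos a.+2)
     (flip_edge b2 (pos a.+3) (pos a.+1) (flip_edge b3 (pos a.+1) (pos a.+4) x.2))).

Lemma block_act_inj a g : injective (block_act a g).
Proof.
case: g => [[[k b1] b2] b3] [r1 V1] [r2 V2] /= [/mulgI-> /flip_edge_inj/flip_edge_inj].
by move/flip_edge_inj->.
Qed.

Lemma block_act_edge a g x (i j : T) : a.+4 <= n -> (i < a) || (j == i.+1 :> nat) ->
  ((i, j) \in (block_act a g x).2) = ((i, j) \in x.2).
Proof.
case: g => [[[k b1] b2] b3] an ij; rewrite /= !flip_edge_other //.
all: rewrite !eq_pos; lia.
Qed.

Lemma block_act_edge_lt a g x k (j : T) : a.+4 <= n -> k < a ->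
  ((pos k, j) \in (block_act a g x).2) = ((pos k, j) \in x.2).
Proof. by move=> an ka; rewrite block_act_edge // val_pos ?ka //; lia. Qed.

Lemma block_act_perm a g x k : a.+4 <= n -> k < a ->
  (block_act a g x).1 (pos k) = x.1 (pos k).
Proof.
case: g => [[[l b1] b2] b3] an ka /=; have l3 := ltn_ord l.
by rewrite permM tpermD // pos_eq; lia.
Qed.

Lemma block_act_feasible a g x : a.+4 <= n -> x \in feasible_pairs ->
  block_act a g x \in feasible_pairs.
Proof.
move=> an /feasible_pairsP[tW hp]; apply/feasible_pairsP; split.
  case: g => [[[k b1] b2] b3] /=.
  by do 3!(apply: flip_edge_tournament; first by rewrite pos_eq; lia).
by move=> i j ij; rewrite block_act_edge ?ij ?eqxx ?orbT //; apply: hp.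
Qed.

Lemma block_act_improvable b a g x : b.+4 < a -> a.+4 <= n ->
  improvable_block b (block_act a g x) = improvable_block b x.
Proof.
move=> ba an; have [b0 b1 b2 b3] : [/\ b < a, b.+1 < a, b.+2 < a & b.+3 < a] by split; lia.
by rewrite /improvable_block !block_act_perm // !block_act_edge_lt.
Qed.

Lemma block_act_hit a x : ranking pref -> a.+4 <= n ->
  exists g, improvable_block a (block_act a g x).
Proof.
move=> rpref an; set r := x.1.
have hit (k : 'I_3) : let r' := (tperm (pos a.+1) (pos (a.+1 + k)) * r)%g in
    (r' (pos a.+2), r' (pos a.+1)) \in pref -> (r' (pos a.+3), r' (pos a.+1)) \in pref ->
    exists g, improvable_block a (block_act a g x).
  move=> r' pref2 pref3; exists (k, (pos a, pos a.+2) \notin x.2,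
    (pos a.+3, pos a.+1) \notin x.2, (pos a.+1, pos a.+4) \notin x.2).
  rewrite /improvable_block /= pref2 pref3 /=.
  apply/and3P; split.
  - by rewrite flip_edge_self flip_edge_other; [rewrite flip_edge_other | ..];
    rewrite ?addNb ?addbb ?pos_eq //; lia.
  - by rewrite flip_edge_other; [rewrite flip_edge_self flip_edge_other | ..];
    rewrite ?addNb ?addbb ?pos_eq //; lia.
  - by rewrite flip_edge_other; [rewrite flip_edge_other; [rewrite flip_edge_self | ..] | ..];
    rewrite ?addNb ?addbb ?pos_eq //; lia.
have rne j k : j <= n -> k <= n -> j != k -> r (pos j) != r (pos k).
  by move=> jn kn jk; rewrite (inj_eq perm_inj) pos_eq.
have pne j k : j <= n -> k <= n -> j != k -> pos j != pos k by move=> *; rewrite pos_eq.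
have [r12 r13 r23] : [/\ r (pos a.+1) != r (pos a.+2), r (pos a.+1) != r (pos a.+3)
  & r (pos a.+2) != r (pos a.+3)] by split; apply: rne; lia.
have [p12 p13 p23] : [/\ pos a.+1 != pos a.+2, pos a.+1 != pos a.+3 & pos a.+2 != pos a.+3 :> T].
  by split; apply: pne; lia.
case: (ranking_min3 rpref r12 r13 r23) => /andP[pref1 pref2].
- by apply: (hit (Ordinal (isT : 0 < 3))); rewrite /= addn0 tperm1 mul1g.
- by apply: (hit (Ordinal (isT : 1 < 3))) => /=;
    rewrite addn1 !permM ?tpermL ?tpermR ?tpermD.
- by apply: (hit (Ordinal (isT : 2 < 3))) => /=;
    rewrite addn2 !permM ?tpermL ?tpermR ?tpermD // eq_sym.
Qed.

Definition block_cycle a : {perm T} :=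
  (tperm (pos a.+2) (pos a.+3) * tperm (pos a.+1) (pos a.+2))%g.

Lemma block_cycle_pos a k : a.+3 <= n -> k <= n -> block_cycle a (pos k) = pos (rot3 a k).
Proof.
move=> an kn.
have pne j l : j <= n -> l <= n -> j != l -> pos j != pos l by move=> *; rewrite pos_eq.
have [p21 p31 p13 p23] : [/\ pos a.+2 != pos a.+1, pos a.+3 != pos a.+1,
  pos a.+1 != pos a.+3 & pos a.+2 != pos a.+3] by split; apply: pne; lia.
rewrite permM /rot3; case: eqP => [->|k1]; first by rewrite (tpermD p21 p31) tpermL.
case: eqP => [->|k2]; first by rewrite tpermL (tpermD p13 p23).
case: eqP => [->|k3]; first by rewrite !tpermR.
have [q1 q2 q3] : [/\ pos a.+1 != pos k, pos a.+2 != pos k & pos a.+3 != pos k].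
  by split; apply: pne => //; lia.
by rewrite (tpermD q2 q3) (tpermD q1 q2).
Qed.

Lemma block_cycleE a (i : T) : a.+3 <= n -> block_cycle a i = rot3 a i :> nat.
Proof.
move=> an; have iN : i <= n by rewrite -ltnS.
by rewrite -[i]inord_val block_cycle_pos // !val_pos // rot3_le.
Qed.

Lemma improvable_block_improvable a x : ranking pref -> a.+4 <= n -> x \in feasible_pairs ->
  improvable_block a x -> ~ unimprovable pref (unlabel x).2 (unlabel x).1.
Proof.
move=> rpref an /feasible_pairsP[tW hp] /and5P[pref21 pref31 e02 e31 e14]; apply.
set r := x.1; set c := block_cycle a; have an3 : a.+3 <= n by rewrite ltnW.
have cE (i : T) : c i = rot3 a i :> nat by apply: block_cycleE.
have c_pos (i : T) k : rot3 a i = k -> c i = pos k.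
  move=> ik; have kN : k <= n by rewrite -ik -cE -ltnS.
  by apply: val_inj; rewrite /= cE ik val_pos.
have [r1 r2 r3] := rot3_block a.
exists (perm_rel (c * r)); split; [|split].
- change (perm_rel (c * r) <> perm_rel r).
  have [c1 c3] : c (pos a.+1) = pos a.+2 /\ c (pos a.+3) = pos a.+1.
    by split; apply: c_pos; rewrite val_pos ?r1 ?r3 //; lia.
  move/setP/(_ ((c * r)%g (pos a.+1), (c * r)%g (pos a.+3))).
  by rewrite perm_relE !(permM c r) c1 c3 perm_relE !val_pos //; lia.
- change (feasible (relabel r^-1 x.2) (perm_rel (c * r))).
  apply/(feasible_perm_relP _ ord0 (relabel_tournament _ tW))/ham_pathP=> i j ij.
  rewrite inE /= !(permM c r) !permK.
  have := rot3_succ a i; rewrite -ij.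
  case=> [[ci cj] | [ci cj] | [ci cj] | cij]; try by rewrite (c_pos _ _ ci) (c_pos _ _ cj).
  by apply: hp; rewrite !cE.
- change (more_aligned pref (perm_rel (c * r)) (perm_rel r)).
  move=> u v; rewrite -[u](permKV (c * r)) -[v](permKV (c * r)).
  move: (((c * r)^-1)%g u) (((c * r)^-1)%g v) => i k.
  rewrite perm_relE !(permM c r) perm_relE !cE => pref_ck lt_ck.
  rewrite ltnNge leq_eqVlt; apply/negP=> /orP[/eqP ki | ki]; first by rewrite ki ltnn in lt_ck.
  have [ia ka] := rot3_inversion ki lt_ck.
  have ci : c i = pos a.+1 by apply: c_pos; rewrite ia r3.
  move: pref_ck; rewrite ci => /(ranking_asym rpref); case: ka => ka.
    have -> : c k = pos a.+2 by apply: c_pos; rewrite ka r1.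
    by rewrite pref21.
  have -> : c k = pos a.+3 by apply: c_pos; rewrite ka r2.
  by rewrite pref31.
Qed.

Definition blockfree j : {set labelled} :=
  [set x in feasible_pairs | [forall i : 'I_j, ~~ improvable_block (5 * i) x]].

Lemma blockfreeS j : blockfree j.+1 = [set x in blockfree j | ~~ improvable_block (5 * j) x].
Proof.
apply/setP=> x; rewrite [RHS]inE [x \in blockfree j]inE [LHS]inE -andbA; congr (_ && _).
apply/forallP/andP=> [free | [/forallP free nimp] i].
  by split; [apply/forallP=> i; apply: (free (widen_ord (leqnSn j) i)) | apply: (free ord_max)].
by case: (unliftP ord_max i) => [i' ->|->] //; rewrite lift_max; apply: free.
Qed.

Lemma card_blockfree j : ranking pref -> 5 * j <= n.+1 ->
  #|blockfree j| * 24 ^ j <= #|feasible_pairs| * 23 ^ j.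
Proof.
move=> rpref; elim: j => [|j IHj] jn.
  by rewrite !muln1; apply/subset_leq_card/subsetP=> x; rewrite inE => /andP[].
have an : (5 * j).+4 <= n by lia.
have := @card_act_avoid _ _ (block_act (5 * j)) (blockfree j) (improvable_block (5 * j)).
rewrite -blockfreeS !card_prod !card_ord card_bool => /(_ (@block_act_inj _)) step.
have {}step : #|blockfree j.+1| * 24 <= #|blockfree j| * 23.
  apply: step => [g x | x _]; last exact: block_act_hit.
  rewrite inE => /andP[feas /forallP free]; rewrite inE block_act_feasible //=.
  by apply/forallP=> i; have ij := ltn_ord i; rewrite block_act_improvable ?free //; lia.
have /IHj : 5 * j <= n.+1 by lia.
rewrite !expnS; nia.
Qed.

End Blocks.

Section Counting.
Variable n : nat.
Local Notation T := 'I_n.+1.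
Variable pref : {set T * T}.
Hypothesis rpref : ranking pref.

Definition feasible_outcomes : {set {set T * T} * {set T * T}} :=
  [set p | [&& ranking p.1, tournament p.2 & Defs.decP (feasible p.2 p.1)]].

Definition unimprovable_outcomes : {set {set T * T} * {set T * T}} :=
  [set p | [&& ranking p.1, tournament p.2, Defs.decP (feasible p.2 p.1)
             & Defs.decP (unimprovable pref p.2 p.1)]].

Lemma unlabel_inj : injective (@unlabel n).
Proof.
move=> [r1 V1] [r2 V2] [/perm_rel_inj e]; rewrite /= {}e => /(congr1 (relabel r2)).
by rewrite -{1 3}[r2]invgK !relabelK => ->.
Qed.

Lemma card_feasible_pairs : #|feasible_pairs n| <= #|feasible_outcomes|.
Proof.
rewrite -(card_imset _ unlabel_inj); apply/subset_leq_card/subsetP.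
move=> _ /imsetP[[r V] /feasible_pairsP[tV hp] ->].
rewrite inE /= perm_rel_ranking relabel_tournament //=; apply/decPP.
apply/(feasible_perm_relP _ ord0 (relabel_tournament _ tV))/ham_pathP=> i j ij.
by rewrite inE /= !permK; apply: hp.
Qed.

Lemma card_unimprovable_outcomes m : 5 * m <= n.+1 ->
  #|unimprovable_outcomes| <= #|blockfree pref m|.
Proof.
move=> mn; rewrite -(card_imset _ unlabel_inj); apply/subset_leq_card/subsetP=> -[R W].
rewrite inE /= => /and4P[rR tW /decPP feas /decPP unimp].
have [r eR] := ranking_perm_rel rR; subst R.
have hp := (feasible_perm_relP _ ord0 tW).1 feas.
have x_feas : (r, relabel r W) \in feasible_pairs n.
  apply/feasible_pairsP; split=> [|i j ij]; first exact: relabel_tournament.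
  by rewrite inE; apply/(ham_pathP _ _ hp).
have ux : unlabel (r, relabel r W) = (perm_rel r, W) by rewrite /unlabel /= relabelK.
apply/imsetP; exists (r, relabel r W) => //; rewrite inE x_feas /=.
apply/forallP=> i; apply/negP=> /(improvable_block_improvable rpref _ x_feas); rewrite ux.
by apply=> //; have := ltn_ord i; lia.
Qed.

Lemma unimprovable_outcomes_decay m : 5 * m <= n.+1 ->
  #|unimprovable_outcomes| * 24 ^ m <= #|feasible_outcomes| * 23 ^ m.
Proof.
move=> mn; apply: leq_trans (leq_mul (card_unimprovable_outcomes mn) (leqnn _)) _.
apply: leq_trans (card_blockfree rpref mn) _.
by rewrite leq_mul2r card_feasible_pairs orbT.
Qed.

End Counting.

Lemma bernoulli_23_24 m : 23 ^ m * (23 + m) <= 23 * 24 ^ m.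
Proof. by elim: m => [|m IHm] //; rewrite !expnS; nia. Qed.

Lemma geometric_ratio a b m : a * 24 ^ m <= b * 23 ^ m -> a * m <= 23 * b.
Proof.
move=> le_ab; have := bernoulli_23_24 m; have : 0 < 23 ^ m by rewrite expn_gt0.
nia.
Qed.

Local Open Scope ring_scope.

Lemma exists_nat_gt (c eps : rat) : 0 <= c -> 0 < eps -> exists K : nat, c < eps * K%:R.
Proof.
move=> c_ge0 eps_gt0; exists (Num.bound (c / eps)); rewrite -ltr_pdivrMl // mulrC.
by apply: archi_boundP; rewrite divr_ge0 // ltW.
Qed.

Lemma ratio_lt (a b c K : nat) (eps : rat) :
  (a * K <= c * b)%N -> c%:R < eps * K%:R -> a%:R / b%:R < eps.
Proof.
move=> le_aK lt_c; have K_gt0 : 0 < K%:R :> rat.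
  by rewrite ltr0n; case: K lt_c {le_aK} => //; rewrite mulr0 ltNge ler0n.
case: (posnP b) => [->|b_gt0].
  by rewrite invr0 mulr0 -(pmulr_lgt0 _ K_gt0); apply: le_lt_trans lt_c.
rewrite ltr_pdivrMr ?ltr0n // -(ltr_pM2r K_gt0).
apply: (@le_lt_trans _ _ (c%:R * b%:R)); first by rewrite -!natrM ler_nat.
by rewrite mulrAC ltr_pM2r ?ltr0n.
Qed.

Unset Implicit Arguments.

Theorem proposition7 (pref : forall n : nat, {set 'I_n * 'I_n})
  (hpref : forall n : nat, ranking (pref n)) :
  forall eps : rat, 0 < eps ->
  exists N : nat, forall n : nat, (N <= n)%N -> cond_prob (pref n) < eps.
Proof.
move=> eps eps_gt0; have [K lt_K] := exists_nat_gt (ler0n _ 23) eps_gt0.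
exists (5 * K).+1 => -[//|n] le_Kn; set m := (n.+1 %/ 5)%N.
have le_m : (5 * m <= n.+1)%N by rewrite mulnC leq_trunc_div.
have le_K : (K <= m)%N by rewrite /m leq_divRL //; lia.
apply: (@ratio_lt _ _ 23 K _ _ lt_K); apply: leq_trans (leq_mul (leqnn _) le_K) _.
exact: geometric_ratio (unimprovable_outcomes_decay (hpref n.+1) le_m).
Qed.
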